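(* For every $a\in\mathbb{S}$ and every finite tuple $u_1,\dots,u_i\in\mathbb{S}\setminus a^\perp$, there are infinitely many $b\in a^\perp$ such that for all $1\le j\le i$: $a\to u_j$ iff $b\to u_j$. Consequently, for any finite set $F\subseteq\mathbb{S}$ and any column $C$ of $\mathbb{S}$ disjoint from $F$, the subgroup of $\mathrm{Aut}(\mathbb{S})$ consisting of automorphisms fixing $F$ pointwise and $C$ setwise has no finite orbits on $C$.
   Context: Directed graphs are simple and loopless ($x\to y$ denotes a directed edge, at most one direction between two distinct vertices). $\mathcal{S}$ is the class of finite such graphs in which $x\perp y:\Leftrightarrow\neg(x\to y\vee y\to x)$ is an equivalence relation (its classes are called columns; $a^\perp$ denotes the column of $a$) and satisfying the parity condition: for $x_1\neq x_2$, $y_1\neq y_2$ with $x_1\perp x_2$, $y_1\perp y_2$, the number of directed edges from $\{x_1,x_2\}$ to $\{y_1,y_2\}$ is even. $\mathbb{S}$ (the semigeneric directed graph) is the Fraïssé limit of $\mathcal{S}$, i.e. the countable homogeneous directed graph whose finite induced substructures are exactly the members of $\mathcal{S}$ up to isomorphism. *)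

From mathcomp Require Import all_boot.
From Stdlib Require List.
Set Implicit Arguments. Unset Strict Implicit. Unset Printing Implicit Defensive.

Definition perp (T : Type) (e : rel T) (x y : T) : bool := ~~ e x y && ~~ e y x.

Definition in_classS (T : finType) (e : rel T) : Prop :=
  (forall x, ~~ e x x) /\
  (forall x y, ~~ (e x y && e y x)) /\
  (* ⊥ is an equivalence relation (reflexivity and symmetry are automatic) *)
  (forall x, perp e x x) /\
  (forall x y, perp e x y -> perp e y x) /\
  (forall x y z, perp e x y -> perp e y z -> perp e x z) /\
  (forall x1 x2 y1 y2, x1 != x2 -> y1 != y2 -> perp e x1 x2 -> perp e y1 y2 ->
     ~~ odd (e x1 y1 + e x1 y2 + e x2 y1 + e x2 y2)).

Definition automorphism (V : Type) (E : rel V) (s : V -> V) : Prop :=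
  bijective s /\ forall x y, E (s x) (s y) = E x y.

(* (V, E) is (isomorphic to) the semigeneric directed graph 𝕊:
   a countable homogeneous directed graph whose age is exactly 𝒮
   (this characterizes the Fraïssé limit up to isomorphism). *)
Definition is_semigeneric (V : Type) (E : rel V) : Prop :=
  (exists c : V -> nat, injective c) /\
  (forall (T : finType) (f : T -> V), injective f ->
     in_classS (fun x y => E (f x) (f y))) /\
  (forall (T : finType) (e : rel T), in_classS e ->
     exists f : T -> V, injective f /\ forall x y, E (f x) (f y) = e x y) /\
  (forall (T : finType) (f g : T -> V), injective f -> injective g ->
     (forall x y, E (f x) (f y) = E (g x) (g y)) ->
     exists s, automorphism E s /\ forall x, s (f x) = g x).

Definition finite_pred (V : Type) (P : V -> Prop) : Prop :=
  exists l : list V, forall x, P x -> List.In x l.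

Definition infinite_pred (V : Type) (P : V -> Prop) : Prop := ~ finite_pred P.

(* The whole theorem rests on one extension property of 𝕊.  Given a vertex
   c and a finite set s of vertices, the structure "s together with a new
   point c' behaving towards s ∪ {c} exactly like c" is again in 𝒮 (it is
   induced by the map sending c' to c).  Embedding it in 𝕊 and moving it back
   onto s by homogeneity produces a vertex b ∉ s ∪ {c} with the same in- and
   out-neighbours as c on s ∪ {c}: a "twin" of c over s, lying in the column
   of c (lemma [twin]).
   - Part 1: a twin of a over {u_1, ..., u_i} ∪ l avoids any finite list l
     and agrees with a on every u_j, so such vertices form an infinite set.
   - Part 2: if b is a twin of c over F, homogeneity extends the partial
     isomorphism (F ∪ {c} ↦ F ∪ {b}, identity on F) to an automorphism; it
     maps c into its own column, hence stabilizes that column (lemma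
     [twin_automorphism]).  Taking twins outside an arbitrary finite list
     shows that the orbit of c is infinite. *)
From mathcomp Require Import all_boot.
From Stdlib Require List.
Set Implicit Arguments. Unset Strict Implicit. Unset Printing Implicit Defensive.

Lemma In_mem (T : eqType) (x : T) (l : seq T) : List.In x l <-> x \in l.
Proof.
elim: l => [|y l IH] //=; rewrite in_cons; split.
- by case=> [->|/IH ->]; rewrite ?eqxx ?orbT.
- by case/orP=> [/eqP ->|/IH]; [left|right].
Qed.

Lemma infinite_if_escapes (T : Type) (P : T -> Prop) :
  (forall l : list T, exists x, P x /\ ~ List.In x l) -> infinite_pred P.
Proof. by move=> escape [l Pl]; have [x [/Pl xl /(_ xl)]] := escape l. Qed.

Lemma perp_sym (T : Type) (e : rel T) x y : perp e x y = perp e y x.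
Proof. by rewrite /perp andbC. Qed.

(* 𝒮 is closed under pullback along any map, injective or not: identified
   points only produce trivially even parity sums. *)
Lemma in_classS_pull (T T' : finType) (e : rel T') (phi : T -> T') :
  in_classS e -> in_classS (fun x y => e (phi x) (phi y)).
Proof.
case=> [irr [asym [refl [sym [trans parity]]]]].
do 5 (split; first by move=> *; eauto).
move=> x1 x2 y1 y2 nx ny px py.
case: (eqVneq (phi x1) (phi x2)) => [<-|ex].
  by case: (e (phi x1) (phi y1)); case: (e (phi x1) (phi y2)).
case: (eqVneq (phi y1) (phi y2)) => [<-|ey]; last exact: parity.
by case: (e (phi x1) (phi y1)); case: (e (phi x2) (phi y1)).
Qed.

Section Semigeneric.

Variable V : eqType.
Variable E : rel V.
Hypothesis HS : is_semigeneric E.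

(* Every finite configuration of (not necessarily distinct) vertices of 𝕊
   induces a member of 𝒮: factor through the injective listing of its
   image. *)
Lemma induced_in_classS (T : finType) (psi : T -> V) :
  in_classS (fun x y => E (psi x) (psi y)).
Proof.
have [_ [age _]] := HS.
pose s := map psi (enum T).
pose S := adhoc_seq_sub_finType s.
pose phi (x : T) : S := SeqSub (map_f psi (mem_enum T x) : psi x \in s).
exact: in_classS_pull phi (age S (@ssval _ s) val_inj).
Qed.

Lemma loopless x : E x x = false.
Proof.
by have [irr _] := induced_in_classS (fun _ : unit => x); apply/negbTE/(irr tt).
Qed.

Lemma perp_trans x y z : perp E x y -> perp E y z -> perp E x z.
Proof.
pose psi (o : option bool) := if o is Some b then (if b then y else z) else x.
have [_ [_ [_ [_ [trans _]]]]] := induced_in_classS psi.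
exact: (trans None (Some true) (Some false)).
Qed.

Lemma perp_eq x y z : perp E x y -> perp E x z = perp E y z.
Proof.
move=> xy; apply/idP/idP; last exact: perp_trans.
by apply: perp_trans; rewrite perp_sym.
Qed.

Definition twin_over (s : seq V) (c b : V) : Prop :=
  forall x, x \in s -> E x b = E x c /\ E b x = E c x.

Lemma twin (c : V) (s : seq V) :
  exists b, b \notin c :: s /\ perp E c b /\ twin_over (c :: s) c b.
Proof.
have [_ [_ [univ homog]]] := HS.
pose S := adhoc_seq_sub_finType (c :: s).
pose psi (o : option S) := if o is Some x then ssval x else c.
have [g [g_inj gE]] := univ _ _ (induced_in_classS psi).
have [sg [[[? sgK _] sgE] sg_g]] := homog S (fun x => g (Some x))
  (@ssval _ (c :: s)) (fun x y e => Some_inj (g_inj _ _ e)) val_inj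
  (fun x y => gE _ _).
have same : twin_over (c :: s) c (sg (g None)).
  move=> x xs; have gx : sg (g (Some (SeqSub xs))) = x by rewrite sg_g.
  by rewrite -{1 3}gx !sgE !gE.
exists (sg (g None)); split; [apply/negP => bs|split=> //].
  by have /(can_inj sgK)/g_inj := sg_g (SeqSub bs).
by have [cb bc] := same c (mem_head _ _); rewrite /perp cb bc loopless.
Qed.

(* A twin b of c over F (with b, c outside F) is the image of c under an
   automorphism fixing F pointwise; since b lies in the column of c, this
   automorphism stabilizes the column of c. *)
Lemma twin_automorphism (F : seq V) (c b : V) :
  c \notin F -> b \notin F -> perp E c b -> twin_over F c b ->
  exists s, [/\ automorphism E s, {in F, forall x, s x = x},
                forall x, perp E c (s x) = perp E c x & s c = b].
Proof.
move=> cF bF cb same; have [_ [_ [_ homog]]] := HS.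
pose S := adhoc_seq_sub_finType F.
pose f (o : option S) := if o is Some x then ssval x else c.
pose g (o : option S) := if o is Some x then ssval x else b.
have inj_at (z : V) : z \notin F ->
    injective (fun o : option S => if o is Some x then ssval x else z).
  move=> zF [x|] [y|] //= => [/val_inj -> //|eq|eq].
  - by move: zF; rewrite -eq (ssvalP x).
  - by move: zF; rewrite eq (ssvalP y).
have fg o o' : E (f o) (f o') = E (g o) (g o').
  case: o o' => [x|] [y|] /=; rewrite ?loopless //.
  - by case: (same _ (ssvalP x)).
  - by case: (same _ (ssvalP y)).
have [s [auto s_fg]] := homog _ f g (inj_at c cF) (inj_at b bF) fg.
have sc : s c = b := s_fg None.
exists s; split=> // [x xF|x]; first exact: s_fg (Some (SeqSub xF)).
by have [_ sE] := auto; rewrite (perp_eq _ cb) -sc /perp !sE.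
Qed.

End Semigeneric.

Theorem mainTheorem7 (V : Type) (E : rel V) (HS : is_semigeneric E) :
  (forall (a : V) (n : nat) (u : 'I_n -> V),
     (forall j, ~~ perp E a (u j)) ->
     infinite_pred (fun b => perp E a b /\ forall j, E a (u j) = E b (u j)))
  /\
  (forall (F : list V) (a : V),
     (forall x, List.In x F -> ~~ perp E a x) ->
     forall c, perp E a c ->
       infinite_pred (fun y => exists s, automorphism E s /\
                        (forall x, List.In x F -> s x = x) /\
                        (forall x, perp E a (s x) = perp E a x) /\
                        s c = y)).
Proof.
have [[code code_inj] _] := HS.
pose W : eqType := inj_type code_inj.
have HW : @is_semigeneric W E := HS.
split=> [a n u _ | F a aF c ac]; apply: infinite_if_escapes => l.
- have [b [bl [ab same]]] := twin HW a ([seq u j | j <- enum 'I_n] ++ l).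
  exists b; split.
    split=> // j; have [] // := same (u j).
    by rewrite inE mem_cat map_f ?mem_enum ?orbT.
  by move/(@In_mem W); apply: contraNnot bl => bl; rewrite inE mem_cat bl !orbT.
- pose FW : seq W := F.
  have [b [bl [cb same]]] := twin HW c (FW ++ l).
  have cF : (c : W) \notin FW.
    by apply/negP => /(@In_mem W)/aF; rewrite ac.
  have bF : b \notin FW.
    by apply: contra bl; rewrite inE mem_cat => ->; rewrite orbT.
  have sameF : twin_over (E : rel W) FW c b.
    by move=> x xF; apply: same; rewrite inE mem_cat xF orbT.
  have [s [auto fixF col sc]] := twin_automorphism HW cF bF cb sameF.
  exists b; split.
    exists s; split=> //; split=> [x /(@In_mem W) /fixF //|].
    by split=> // x; rewrite (perp_eq HW (s x) ac) (perp_eq HW x ac) col.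
  by move/(@In_mem W); apply: contraNnot bl => bl; rewrite inE mem_cat bl !orbT.
Qed.
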